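(* Let $p_{0,0},p_{1,0}\in[0,1]$ with $p_{0,0}<p_{1,0}$ (negatively correlated arm) and $0\le\rho_0<\rho_1\le1$. Then the belief updates $\gamma_0$ and $\gamma_1$ defined in the context are decreasing in $\pi\in[0,1]$; moreover $\gamma_1$ is concave and $\gamma_0$ is convex, and $p_{0,0}\le\gamma_0(\pi)\le\gamma_1(\pi)\le p_{1,0}$ for all $\pi\in[0,1]$.
   Context: For $\pi\in[0,1]$ define $\gamma_1(\pi)=\frac{(1-\pi)\rho_1p_{1,0}+\pi\rho_0p_{0,0}}{\rho_1(1-\pi)+\rho_0\pi}$ and $\gamma_0(\pi)=\frac{(1-\pi)(1-\rho_1)p_{1,0}+\pi(1-\rho_0)p_{0,0}}{(1-\rho_1)(1-\pi)+(1-\rho_0)\pi}$. (These are the posterior probabilities of hidden state $0$ of a two-state Markov chain with transition probability $p_{i,0}$ from state $i$ to $0$, after an ACK, respectively a NACK, where $\rho_i$ is the ACK probability in state $i$.) *)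

From Stdlib Require Import Reals.
Open Scope R_scope.

(* Posterior probability of state 0 after an ACK. *)
Definition gamma1 (p00 p10 rho0 rho1 pi : R) : R :=
  ((1 - pi) * rho1 * p10 + pi * rho0 * p00) / (rho1 * (1 - pi) + rho0 * pi).

(* Posterior probability of state 0 after a NACK. *)
Definition gamma0 (p00 p10 rho0 rho1 pi : R) : R :=
  ((1 - pi) * (1 - rho1) * p10 + pi * (1 - rho0) * p00)
  / ((1 - rho1) * (1 - pi) + (1 - rho0) * pi).

(* Denominators (the probability of an ACK / a NACK). *)
Definition dack (rho0 rho1 pi : R) : R := rho1 * (1 - pi) + rho0 * pi.
Definition dnack (rho0 rho1 pi : R) : R := (1 - rho1) * (1 - pi) + (1 - rho0) * pi.

(* Both posteriors are homographic functions of the prior,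
   f(p) = (a (1 - p) + b p) / (c (1 - p) + d p).  The difference quotient of f
   is -(ad - bc) / (D(x) D(y)), so f is nonincreasing when ad - bc >= 0, and the
   gap between a chord and f is t (1 - t) (d - c)(ad - bc)(y - x)^2 / (D(x) D(y) D(m)),
   so the sign of (d - c)(ad - bc) decides concavity or convexity.  For gamma1,
   ad - bc = rho0 rho1 (p10 - p00) and d - c = rho0 - rho1 < 0; for gamma0,
   ad - bc = (1 - rho0)(1 - rho1)(p10 - p00) and d - c = rho1 - rho0 > 0.
   Finally each posterior is a weighted mean of p00 and p10, and
   gamma1 - gamma0 = p (1 - p)(rho1 - rho0)(p10 - p00) / (dack dnack). *)

From Stdlib Require Import Reals Psatz.
Open Scope R_scope.

Lemma Rle_of_sub_eq_div (x y n d : R) : x - y = n / d -> 0 <= n -> 0 < d -> y <= x.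
Proof.
  intros E Hn Hd.
  assert (0 <= n / d) by (apply Rle_mult_inv_pos; assumption).
  lra.
Qed.

Lemma convex_comb_pos (u v t : R) : 0 < u -> 0 < v -> 0 <= t <= 1 -> 0 < t * u + (1 - t) * v.
Proof. intros. nra. Qed.

Lemma weighted_mean_bounds (w1 w2 lo hi : R) :
  0 <= w1 -> 0 <= w2 -> 0 < w1 + w2 -> lo <= hi ->
  lo <= (w1 * hi + w2 * lo) / (w1 + w2) <= hi.
Proof.
  intros H1 H2 Hw Hlh. split.
  - apply (Rle_of_sub_eq_div _ _ (w1 * (hi - lo)) (w1 + w2)); [field | nra | assumption]; lra.
  - apply (Rle_of_sub_eq_div _ _ (w2 * (hi - lo)) (w1 + w2)); [field | nra | assumption]; lra.
Qed.

Section Homography.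

Variables a b c d : R.

Definition homography (p : R) : R := (a * (1 - p) + b * p) / (c * (1 - p) + d * p).

Lemma homography_sub (x y : R) :
  c * (1 - x) + d * x <> 0 -> c * (1 - y) + d * y <> 0 ->
  homography x - homography y
  = (a * d - b * c) * (y - x) / ((c * (1 - x) + d * x) * (c * (1 - y) + d * y)).
Proof. intros. unfold homography. field. split; assumption. Qed.

Lemma homography_antitone (x y : R) :
  0 <= a * d - b * c -> x <= y ->
  0 < c * (1 - x) + d * x -> 0 < c * (1 - y) + d * y ->
  homography y <= homography x.
Proof.
  intros Hdet Hxy Dx Dy.
  eapply Rle_of_sub_eq_div.
  - apply homography_sub; lra.
  - apply Rmult_le_pos; lra.
  - apply Rmult_lt_0_compat; assumption.
Qed.

Lemma homography_chord_gap (x y t : R) :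
  let m := t * x + (1 - t) * y in
  c * (1 - x) + d * x <> 0 -> c * (1 - y) + d * y <> 0 -> c * (1 - m) + d * m <> 0 ->
  t * homography x + (1 - t) * homography y - homography m
  = t * (1 - t) * ((d - c) * (a * d - b * c)) * (y - x) ^ 2
    / ((c * (1 - x) + d * x) * (c * (1 - y) + d * y) * (c * (1 - m) + d * m)).
Proof. intros m. subst m. intros. unfold homography. field. repeat split; assumption. Qed.

Lemma homography_den_convex_comb_pos (x y t : R) :
  0 < c * (1 - x) + d * x -> 0 < c * (1 - y) + d * y -> 0 <= t <= 1 ->
  0 < c * (1 - (t * x + (1 - t) * y)) + d * (t * x + (1 - t) * y).
Proof.
  intros Dx Dy Ht.
  replace (c * (1 - (t * x + (1 - t) * y)) + d * (t * x + (1 - t) * y))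
    with (t * (c * (1 - x) + d * x) + (1 - t) * (c * (1 - y) + d * y)) by ring.
  apply convex_comb_pos; assumption.
Qed.

Lemma homography_convex (x y t : R) :
  0 <= (d - c) * (a * d - b * c) -> 0 <= t <= 1 ->
  0 < c * (1 - x) + d * x -> 0 < c * (1 - y) + d * y ->
  homography (t * x + (1 - t) * y) <= t * homography x + (1 - t) * homography y.
Proof.
  intros Hs Ht Dx Dy.
  pose proof (homography_den_convex_comb_pos x y t Dx Dy Ht) as Dm.
  eapply Rle_of_sub_eq_div.
  - apply homography_chord_gap; lra.
  - apply Rmult_le_pos; [apply Rmult_le_pos; [apply Rmult_le_pos|] | apply pow2_ge_0]; lra.
  - repeat apply Rmult_lt_0_compat; assumption.
Qed.

End Homography.

Lemma homography_opp (a b c d p : R) :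
  homography (- a) (- b) c d p = - homography a b c d p.
Proof. unfold homography, Rdiv. ring. Qed.

Lemma homography_concave (a b c d x y t : R) :
  (d - c) * (a * d - b * c) <= 0 -> 0 <= t <= 1 ->
  0 < c * (1 - x) + d * x -> 0 < c * (1 - y) + d * y ->
  t * homography a b c d x + (1 - t) * homography a b c d y
  <= homography a b c d (t * x + (1 - t) * y).
Proof.
  intros Hs Ht Dx Dy.
  assert (Hs' : 0 <= (d - c) * (- a * d - - b * c)) by nra.
  pose proof (homography_convex (- a) (- b) c d x y t Hs' Ht Dx Dy) as Hconv.
  rewrite !homography_opp in Hconv.
  lra.
Qed.

Lemma gamma1_homography (p00 p10 rho0 rho1 p : R) :
  gamma1 p00 p10 rho0 rho1 p = homography (rho1 * p10) (rho0 * p00) rho1 rho0 p.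
Proof. unfold gamma1, homography. f_equal. ring. Qed.

Lemma gamma0_homography (p00 p10 rho0 rho1 p : R) :
  gamma0 p00 p10 rho0 rho1 p
  = homography ((1 - rho1) * p10) ((1 - rho0) * p00) (1 - rho1) (1 - rho0) p.
Proof. unfold gamma0, homography. f_equal. ring. Qed.

Lemma gamma1_weighted_mean (p00 p10 rho0 rho1 p : R) :
  gamma1 p00 p10 rho0 rho1 p
  = (((1 - p) * rho1) * p10 + (p * rho0) * p00) / ((1 - p) * rho1 + p * rho0).
Proof. unfold gamma1. f_equal; ring. Qed.

Lemma gamma0_weighted_mean (p00 p10 rho0 rho1 p : R) :
  gamma0 p00 p10 rho0 rho1 p
  = (((1 - p) * (1 - rho1)) * p10 + (p * (1 - rho0)) * p00)
    / ((1 - p) * (1 - rho1) + p * (1 - rho0)).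
Proof. unfold gamma0. f_equal; ring. Qed.

Lemma gamma1_sub_gamma0 (p00 p10 rho0 rho1 p : R) :
  dack rho0 rho1 p <> 0 -> dnack rho0 rho1 p <> 0 ->
  gamma1 p00 p10 rho0 rho1 p - gamma0 p00 p10 rho0 rho1 p
  = p * (1 - p) * (rho1 - rho0) * (p10 - p00) / (dack rho0 rho1 p * dnack rho0 rho1 p).
Proof. unfold gamma1, gamma0, dack, dnack. intros. field. split; assumption. Qed.

Theorem lemma5 (p00 p10 rho0 rho1 : R) :
  0 <= p00 <= 1 -> 0 <= p10 <= 1 -> p00 < p10 ->
  0 <= rho0 -> rho0 < rho1 -> rho1 <= 1 ->
  (* gamma1 is nonincreasing on the points of [0,1] where it is defined *)
  (forall x y, 0 <= x -> x <= y -> y <= 1 ->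
     0 < dack rho0 rho1 x -> 0 < dack rho0 rho1 y ->
     gamma1 p00 p10 rho0 rho1 y <= gamma1 p00 p10 rho0 rho1 x) /\
  (* gamma0 is nonincreasing on the points of [0,1] where it is defined *)
  (forall x y, 0 <= x -> x <= y -> y <= 1 ->
     0 < dnack rho0 rho1 x -> 0 < dnack rho0 rho1 y ->
     gamma0 p00 p10 rho0 rho1 y <= gamma0 p00 p10 rho0 rho1 x) /\
  (* gamma1 is concave *)
  (forall x y t, 0 <= x <= 1 -> 0 <= y <= 1 -> 0 <= t <= 1 ->
     0 < dack rho0 rho1 x -> 0 < dack rho0 rho1 y ->
     t * gamma1 p00 p10 rho0 rho1 x + (1 - t) * gamma1 p00 p10 rho0 rho1 y
       <= gamma1 p00 p10 rho0 rho1 (t * x + (1 - t) * y)) /\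
  (* gamma0 is convex *)
  (forall x y t, 0 <= x <= 1 -> 0 <= y <= 1 -> 0 <= t <= 1 ->
     0 < dnack rho0 rho1 x -> 0 < dnack rho0 rho1 y ->
     gamma0 p00 p10 rho0 rho1 (t * x + (1 - t) * y)
       <= t * gamma0 p00 p10 rho0 rho1 x + (1 - t) * gamma0 p00 p10 rho0 rho1 y) /\
  (* ordering *)
  (forall pi, 0 <= pi <= 1 ->
     0 < dack rho0 rho1 pi -> 0 < dnack rho0 rho1 pi ->
     p00 <= gamma0 p00 p10 rho0 rho1 pi /\
     gamma0 p00 p10 rho0 rho1 pi <= gamma1 p00 p10 rho0 rho1 pi /\
     gamma1 p00 p10 rho0 rho1 pi <= p10).
Proof.
  intros H00 H10 Hp Hr0 Hr Hr1.
  assert (Det1 : 0 <= rho1 * p10 * rho0 - rho0 * p00 * rho1).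
  { replace (rho1 * p10 * rho0 - rho0 * p00 * rho1) with (rho0 * rho1 * (p10 - p00)) by ring.
    apply Rmult_le_pos; [apply Rmult_le_pos |]; lra. }
  assert (Det0 : 0 <= (1 - rho1) * p10 * (1 - rho0) - (1 - rho0) * p00 * (1 - rho1)).
  { replace ((1 - rho1) * p10 * (1 - rho0) - (1 - rho0) * p00 * (1 - rho1))
      with ((1 - rho0) * (1 - rho1) * (p10 - p00)) by ring.
    apply Rmult_le_pos; [apply Rmult_le_pos |]; lra. }
  split; [|split; [|split; [|split]]].
  - intros x y _ Hxy _ Dx Dy. rewrite !gamma1_homography.
    apply homography_antitone; assumption.
  - intros x y _ Hxy _ Dx Dy. rewrite !gamma0_homography.
    apply homography_antitone; assumption.
  - intros x y t _ _ Ht Dx Dy. rewrite !gamma1_homography.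
    apply homography_concave; [nra | assumption ..].
  - intros x y t _ _ Ht Dx Dy. rewrite !gamma0_homography.
    apply homography_convex; [nra | assumption ..].
  - intros p Hpi Da Dn.
    assert (Ack : 0 < (1 - p) * rho1 + p * rho0) by (unfold dack in Da; lra).
    assert (Nack : 0 < (1 - p) * (1 - rho1) + p * (1 - rho0)) by (unfold dnack in Dn; lra).
    split; [|split].
    + rewrite gamma0_weighted_mean. apply weighted_mean_bounds; nra.
    + eapply Rle_of_sub_eq_div.
      * apply gamma1_sub_gamma0; lra.
      * apply Rmult_le_pos; [apply Rmult_le_pos; [apply Rmult_le_pos|] |]; lra.
      * apply Rmult_lt_0_compat; assumption.
    + rewrite gamma1_weighted_mean. apply weighted_mean_bounds; nra.
Qed.
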